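(* Let $(e_i)$ be a right dominant normalized basis of a Banach space $E$, and let $J(e_i)$, $(u_i)$ be as in the context. There exists a constant $C$ such that the following holds. Whenever $l\in\mathbb N$, $n(1)<n(2)<\dots<n(l+1)$ are positive integers and $(a_j)$ are real numbers such that \[ v_i=\sum_{j=n(i)}^{n(i+1)-1}a_ju_j,\qquad \sum_{j=n(i)}^{n(i+1)-1}a_j=0,\qquad 1\le i\le l, \] there is a block basis $(w_i)_{i=1}^l$ of $(e_i)$ such that $\|w_i\|\le\|v_i\|$ for $1\le i\le l$ and $\|\sum_{i=1}^l v_i\|\le C\|\sum_{i=1}^l w_i\|$.
   Context: A basic sequence $(x_i)$ is right dominant if it is unconditional and there is a constant $D$ such that whenever $1\le m(1)\le n(1)<m(2)\le n(2)<\dots$ and $(a_{n(i)})$ is a finitely nonzero real sequence, $\|\sum a_{n(i)}x_{m(i)}\|\le D\|\sum a_{n(i)}x_{n(i)}\|$. Given a normalized unconditional basis $(e_i)$ of $E$, for finitely nonzero real $(a_i)$ define \[\Big\|\sum a_iu_i\Big\|=\sup\Big\{\Big\|\sum_{i=1}^k\Big(\sum_{j=p(i)}^{p(i+1)-1}a_j\Big)e_{p(i)}\Big\|_E : k\in\mathbb N,\ 1=p(1)<p(2)<\dots<p(k+1)\Big\},\] and let $J(e_i)$ be the completion of the linear span of the formal vectors $(u_i)$ under this norm; $(u_i)$ is a basis of $J(e_i)$. A block basis of a basis $(x_i)$ is a sequence $w_m=\sum_{j=q_m}^{q_{m+1}-1}c_jx_j$ with $q_1<q_2<\cdots$. *)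

(* Indices are 0-based: e 0 is the paper's e_1. *)
From HB Require Import structures.
From mathcomp Require Import all_boot all_order all_algebra.
From mathcomp Require Import all_classical all_reals all_analysis.
Set Implicit Arguments. Unset Strict Implicit. Unset Printing Implicit Defensive.
Import Order.TTheory GRing.Theory Num.Theory.
Import numFieldNormedType.Exports.
Local Open Scope classical_set_scope.
Local Open Scope ring_scope.

Section Defs.
Context {R : realType} {E : normedModType R}.

Definition schauder_basis (e : nat -> E) : Prop :=
  forall x : E, exists! a : nat -> R,
    (fun N : nat => \sum_(i < N) a i *: e i) @ \oo --> x.

Definition normalized (e : nat -> E) : Prop := forall i, `|e i| = 1.

Definition unconditional (e : nat -> E) : Prop :=
  exists K : R, forall (N : nat) (a : nat -> R) (eps : nat -> bool),
    `|\sum_(i < N) (if eps i then a i else - a i) *: e i|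
      <= K * `|\sum_(i < N) a i *: e i|.

Definition right_dominant (e : nat -> E) : Prop :=
  unconditional e /\
  exists D : R, forall (k : nat) (m n : nat -> nat) (b : nat -> R),
    (forall i, (i < k)%N -> (m i <= n i)%N) ->
    (forall i, (i.+1 < k)%N -> (n i < m i.+1)%N) ->
    `|\sum_(i < k) b i *: e (m i)| <= D * `|\sum_(i < k) b i *: e (n i)|.

Definition is_partition (p : seq nat) : bool :=
  [&& (1 < size p)%N, nth 0%N p 0 == 0%N & sorted ltn p].

Definition Jval (e : nat -> E) (a : nat -> R) (p : seq nat) : R :=
  `| \sum_(i < (size p).-1)
       (\sum_(nth 0%N p i <= j < nth 0%N p i.+1) a j) *: e (nth 0%N p i) |.

(* the norm of J(e_i) on sum_j a_j u_j (a finitely supported) *)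
Definition Jnorm (e : nat -> E) (a : nat -> R) : R :=
  sup [set Jval e a p | p in [set p | is_partition p]].

Definition restr (a : nat -> R) (s t : nat) : nat -> R :=
  fun j => if (s <= j < t)%N then a j else 0.

Definition blk (e : nat -> E) (q : nat -> nat) (c : nat -> R) (i : nat) : E :=
  \sum_(q i <= j < q i.+1) c j *: e j.

End Defs.

From mathcomp Require Import all_boot all_order all_algebra.
From mathcomp Require Import all_classical all_reals all_analysis.
From mathcomp Require Import ring lra.
Set Implicit Arguments. Unset Strict Implicit. Unset Printing Implicit Defensive.
Import Order.TTheory GRing.Theory Num.Theory.
Import numFieldNormedType.Exports.

(* Let S be the partial-sum function of v = v_1 + ... + v_l; it vanishes at every cut
   point n(i).  Take a partition p almost attaining the J-norm of v and refine it by
   the cut points into Q.  The vector w = sum_{t in Q} (S(next_Q t) - S t) e_t splits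
   into blocks w_i supported on [n(i), n(i+1)), and w_i is exactly the vector whose
   norm is the J-value of v_i at the partition Q restricted to [n(i), n(i+1)], so
   |w_i| <= |v_i|.  The vector of partition sums of v along p differs from w by
   (a) the coordinates of w at the added points, (b) the coordinate of w at the last
   point of p, and (c) for every gap of p containing added points, the value
   S(p_{j+1}) carried by the last added point of the gap but placed at p_j instead.
   Terms (a) and (b) are coordinate projections of w, bounded by unconditionality;
   term (c) is a projection of w shifted to the left, bounded by right dominance. *)

Lemma sorted_ltn_nth_lt (s : seq nat) i j :
  sorted ltn s -> i < j -> j < size s -> nth 0 s i < nth 0 s j.
Proof.
move=> s_sorted ij js; apply: (sorted_ltn_nth ltn_trans) => //; rewrite inE //.
exact: ltn_trans ij js.
Qed.

Lemma sorted_ltn_nth_leq (s : seq nat) i j :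
  sorted ltn s -> i <= j -> j < size s -> nth 0 s i <= nth 0 s j.
Proof.
move=> s_sorted; rewrite leq_eqVlt => /orP[/eqP-> //|ij js].
exact/ltnW/sorted_ltn_nth_lt.
Qed.

Lemma sorted_ltn_uniq (s : seq nat) : sorted ltn s -> uniq s.
Proof. exact/sorted_uniq/ltnn/ltn_trans. Qed.

Lemma sorted_ltn_index_lt (s : seq nat) x y :
  sorted ltn s -> x \in s -> y \in s -> x < y -> index x s < index y s.
Proof.
move=> s_sorted xs ys xy; rewrite ltnNge; apply/negP => yx.
have := sorted_ltn_nth_leq s_sorted yx; rewrite index_mem => /(_ xs).
by rewrite !nth_index // leqNgt xy.
Qed.

Lemma sorted_ltn_leq_last (s : seq nat) z : sorted ltn s -> z \in s -> z <= last 0 s.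
Proof.
move=> s_sorted zs; have s_gt0 : 0 < size s by case: s zs s_sorted.
rewrite -(nth_index 0 zs) -nth_last; apply: sorted_ltn_nth_leq => //.
  by rewrite -ltnS prednK // index_mem.
by rewrite prednK.
Qed.

Lemma leq_homo_upto (f : nat -> nat) k i j :
  (forall i, i < k -> f i <= f i.+1) -> i <= j -> j <= k -> f i <= f j.
Proof.
move=> f_step; elim: j => [|j IHj]; first by rewrite leqn0 => /eqP->.
rewrite leq_eqVlt => /orP[/eqP-> //|ij] jk.
exact: leq_trans (IHj ij (ltnW jk)) (f_step _ jk).
Qed.

Section Neighbours.
Variables (s : seq nat) (N : nat).

(* The successor of x in s; N when x is the last element. *)
Definition next_in x := nth N s (index x s).+1.
Definition prev_in y := nth 0 s (index y s).-1.

Hypothesis s_sorted : sorted ltn s.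

Lemma next_in_nth j : j < size s -> next_in (nth 0 s j) = nth N s j.+1.
Proof. by move=> js; rewrite /next_in index_uniq // sorted_ltn_uniq. Qed.

Lemma next_in_nth_lt j : j.+1 < size s -> next_in (nth 0 s j) = nth 0 s j.+1.
Proof. by move=> js; rewrite next_in_nth ?(ltnW js) // (set_nth_default 0). Qed.

Lemma prev_in_next_in x : x \in s -> next_in x < N -> prev_in (next_in x) = x.
Proof.
move=> xs; rewrite /next_in /prev_in.
case: (ltnP (index x s).+1 (size s)) => h; last by rewrite nth_default // ltnn.
by rewrite index_uniq ?sorted_ltn_uniq //= nth_index.
Qed.

Lemma prev_inP y u : y \in s -> u \in s -> u < y ->
  [/\ prev_in y \in s, prev_in y < y, u <= prev_in y & next_in (prev_in y) = y].
Proof.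
move=> ys us uy.
have iuy := sorted_ltn_index_lt s_sorted us ys uy.
have iy : index y s < size s by rewrite index_mem.
have ip : (index y s).-1 < size s by apply: leq_ltn_trans iy; apply: leq_pred.
have iyS : (index y s).-1.+1 = index y s by rewrite prednK //; apply: leq_ltn_trans iuy.
rewrite /prev_in; split.
- exact: mem_nth.
- by rewrite -{2}(nth_index 0 ys); apply: sorted_ltn_nth_lt => //; rewrite -{2}iyS.
- by rewrite -(nth_index 0 us); apply: sorted_ltn_nth_leq => //; rewrite -ltnS iyS.
- by rewrite next_in_nth_lt ?iyS // nth_index.
Qed.

Hypothesis s_bounded : all (fun x => x < N) s.

Lemma next_inP x : x \in s ->
  [/\ x < next_in x, next_in x <= N, next_in x < N -> next_in x \in s
    & forall z, z \in s -> x < z -> next_in x <= z].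
Proof.
move: s_bounded => /allP s_lt xs; rewrite /next_in.
have next_min z : z \in s -> x < z -> (index x s).+1 <= index z s.
  exact: sorted_ltn_index_lt.
case: (ltnP (index x s).+1 (size s)) => h; last first.
  rewrite nth_default //; split => //; [exact: s_lt | by rewrite ltnn |].
  move=> z zs xz; have := leq_trans h (next_min z zs xz).
  by rewrite leqNgt index_mem zs.
rewrite (set_nth_default 0) //; split.
- by rewrite -{1}(nth_index 0 xs); apply: sorted_ltn_nth_lt.
- by apply/ltnW/s_lt/mem_nth.
- by move=> _; apply: mem_nth.
- move=> z zs xz; rewrite -(nth_index 0 zs).
  by apply: sorted_ltn_nth_leq => //; [exact: next_min | rewrite index_mem].
Qed.

Lemma next_in_eq x y : x \in s -> x < y -> y <= N -> (y < N -> y \in s) ->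
  (forall z, z \in s -> x < z -> y <= z) -> next_in x = y.
Proof.
move=> xs xy yN y_in y_min; have [x_lt leN in_s nx_min] := next_inP xs.
apply/eqP; rewrite eqn_leq; apply/andP; split.
  have [yN'|/(leq_trans leN)//] := ltnP y N.
  exact: nx_min (y_in yN') xy.
have [nxN|/(leq_trans yN)//] := ltnP (next_in x) N.
exact: y_min (in_s nxN) x_lt.
Qed.

End Neighbours.

Local Open Scope ring_scope.

Definition psum (V : zmodType) (b : nat -> V) (x : nat) : V := \sum_(0 <= j < x) b j.

Lemma big_nat_psum (V : zmodType) (b : nat -> V) x y : (x <= y)%N ->
  \sum_(x <= j < y) b j = psum b y - psum b x.
Proof. by move=> xy; rewrite /psum (big_cat_nat (leq0n x) xy) /= addrC addrK. Qed.

Lemma big_nat_chain (V : zmodType) (f : nat -> nat) k (g : nat -> V) :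
  (forall i, (i < k)%N -> (f i <= f i.+1)%N) ->
  \sum_(i < k) \sum_(f i <= j < f i.+1) g j = \sum_(f 0%N <= j < f k) g j.
Proof.
elim: k => [|k IHk] f_step; first by rewrite big_ord0 big_geq.
rewrite big_ord_recr /= IHk => [|i ik]; last exact/f_step/ltnW.
by rewrite -big_cat_nat // ?f_step //; apply: (leq_homo_upto f_step).
Qed.

Lemma big_ord_interval (V : zmodType) (g : nat -> V) m k N : (m <= k)%N -> (k <= N)%N ->
  \sum_(t < N) (if (m <= t < k)%N then g t else 0) = \sum_(m <= t < k) g t.
Proof.
move=> mk kN; rewrite -(big_mkord xpredT (fun t => if (m <= t < k)%N then g t else 0)).
rewrite (big_cat_nat (leq0n m)) ?(leq_trans mk kN) //= (big_cat_nat mk kN) /=.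
rewrite [X in X + _]big1_seq ?add0r => [|t]; last first.
  by rewrite mem_index_iota => /andP[_ /andP[_ tm]]; rewrite leqNgt tm.
rewrite [X in _ + X]big1_seq ?addr0 => [|t]; last first.
  by rewrite mem_index_iota => /andP[_ /andP[kt _]]; rewrite ltnNge kt andbF.
by apply: eq_big_nat => t ->.
Qed.

Lemma big_partition_next_in (R : pzRingType) (V : lmodType R) (s : seq nat) N
    (F : nat -> nat -> R) (g : nat -> V) :
  sorted ltn s -> all (fun x => x < N)%N s -> (0 < size s)%N ->
  \sum_(j < (size s).-1) F (nth 0%N s j) (nth 0%N s j.+1) *: g (nth 0%N s j)
    + F (last 0%N s) N *: g (last 0%N s)
  = \sum_(t < N) (if (t : nat) \in s then F t (next_in s N t) else 0) *: g t.
Proof.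
move=> s_sorted s_bounded s_gt0.
transitivity (\sum_(j < size s) F (nth 0%N s j) (nth N s j.+1) *: g (nth 0%N s j)).
  have sizeS : size s = (size s).-1.+1 by rewrite prednK.
  rewrite [in RHS]sizeS big_ord_recr /= -sizeS (@nth_default _ N s (size s)) // nth_last.
  congr (_ + _); apply: eq_bigr => j _; rewrite (set_nth_default 0%N N) //.
  by rewrite {2}sizeS ltnS.
rewrite (eq_bigr (fun t : 'I_N => if (t : nat) \in s then F t (next_in s N t) *: g t else 0));
  last by move=> t _; case: ifP; rewrite ?scale0r.
rewrite -big_mkcond -(big_mkord (mem s) (fun t => F t (next_in s N t) *: g t)).
rewrite -big_filter (perm_big s) => [|]; last first.
  apply: uniq_perm; [exact/filter_uniq/iota_uniq | exact: sorted_ltn_uniq |].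
  move=> x; rewrite mem_filter mem_iota /= add0n subn0.
  by case xs: (x \in s) => //=; move/allP: s_bounded => /(_ _ xs).
rewrite [RHS](big_nth 0%N) big_mkord; apply: eq_bigr => j _.
by rewrite next_in_nth.
Qed.

Section Unconditional.
Variables (R : numFieldType) (E : normedModType R).

Definition unconditional_with (e : nat -> E) (K : R) :=
  forall (N : nat) (a : nat -> R) (eps : nat -> bool),
    `|\sum_(i < N) (if eps i then a i else - a i) *: e i| <= K * `|\sum_(i < N) a i *: e i|.

Definition right_dominant_with (e : nat -> E) (D : R) :=
  forall (k : nat) (m n : nat -> nat) (b : nat -> R),
    (forall i, (i < k)%N -> (m i <= n i)%N) ->
    (forall i, (i.+1 < k)%N -> (n i < m i.+1)%N) ->
    `|\sum_(i < k) b i *: e (m i)| <= D * `|\sum_(i < k) b i *: e (n i)|.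

(* A coordinate projection is the average of the identity and a sign change. *)
Lemma norm_sum_mask_le (e : nat -> E) K : unconditional_with e K ->
  forall N (c : nat -> R) (T : pred nat),
  `|\sum_(t < N) (if T t then c t else 0) *: e t| <= (1 + K) / 2 * `|\sum_(t < N) c t *: e t|.
Proof.
move=> e_uncond N c T.
have -> : \sum_(t < N) (if T t then c t else 0) *: e t =
    2^-1 *: (\sum_(t < N) c t *: e t + \sum_(t < N) (if T t then c t else - c t) *: e t).
  rewrite -big_split scaler_sumr; apply: eq_bigr => t _.
  case: (T t) => /=; rewrite -scalerDl scalerA; congr (_ *: _); last by rewrite subrr mulr0.
  by field.
set x := \sum_(t < N) c t *: e t.
set y := \sum_(t < N) (if T t then c t else - c t) *: e t.
have xy_le : `|x + y| <= (1 + K) * `|x|.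
  by rewrite mulrDl mul1r (le_trans (ler_normD _ _)) // lerD2l e_uncond.
rewrite normrZ ger0_norm ?invr_ge0 // [X in _ <= X]mulrAC mulrC.
by apply: ler_wpM2r; rewrite ?invr_ge0.
Qed.

End Unconditional.

Section JNorm.
Local Open Scope classical_set_scope.
Variables (R : realType) (E : normedModType R) (e : nat -> E).
Variables (b : nat -> R) (M : nat).
Hypothesis b_supp : forall j, (M <= j)%N -> b j = 0.

Lemma Jval_le_sum_norm p : normalized e -> is_partition p ->
  Jval e b p <= \sum_(j < M) `|b j|.
Proof.
move=> e_norm /and3P[_ /eqP p_head p_sorted].
have p_step i : (i < (size p).-1)%N -> (nth 0%N p i <= nth 0%N p i.+1)%N.
  by move=> ip; apply: sorted_ltn_nth_leq => //; rewrite -ltn_predRL.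
rewrite /Jval (le_trans (ler_norm_sum _ _ _)) //.
apply: le_trans (_ : \sum_(i < (size p).-1)
    \sum_(nth 0%N p i <= j < nth 0%N p i.+1) `|b j| <= _).
  by apply: ler_sum => i _; rewrite normrZ e_norm mulr1 ler_norm_sum.
rewrite (big_nat_chain (fun j => `|b j|) p_step) p_head -(big_mkord xpredT (fun j => `|b j|)).
set x := nth 0%N p _; have [xM|Mx] := leqP x M.
  by rewrite [leRHS](big_cat_nat (leq0n x) xM) /= lerDl sumr_ge0.
rewrite (big_cat_nat (leq0n M) (ltnW Mx)) /= [X in _ + X]big1_seq ?addr0 // => j.
by rewrite mem_index_iota => /andP[_ /andP[Mj _]]; rewrite b_supp ?normr0.
Qed.

Lemma Jvals_bounded : normalized e ->
  has_ubound [set Jval e b p | p in [set p | is_partition p]].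
Proof.
by move=> e_norm; exists (\sum_(j < M) `|b j|) => _ [p p_part <-]; exact: Jval_le_sum_norm.
Qed.

Lemma Jval_le_Jnorm p : normalized e -> is_partition p -> Jval e b p <= Jnorm e b.
Proof. by move=> e_norm p_part; apply: (ub_le_sup (Jvals_bounded e_norm)); exists p. Qed.

Lemma Jnorm_le_twice_Jval : normalized e ->
  exists2 p, is_partition p & Jnorm e b <= 2 * Jval e b p.
Proof.
move=> e_norm; have p01 : is_partition [:: 0%N; 1%N] by [].
have [Jnorm_le0|Jnorm_gt0] := lerP (Jnorm e b) 0.
  by exists [:: 0%N; 1%N]; rewrite // (le_trans Jnorm_le0) ?mulr_ge0 ?normr_ge0.
have Jvals_sup : has_sup [set Jval e b p | p in [set p | is_partition p]].
  by split; [exists (Jval e b [:: 0%N; 1%N]); exists [:: 0%N; 1%N] | exact: Jvals_bounded].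
have [_ [p p_part <-] close] := sup_adherent (divr_gt0 Jnorm_gt0 (ltr0n R 2)) Jvals_sup.
exists p => //; rewrite -/(Jnorm e b) in close; lra.
Qed.

End JNorm.

Section RestrictedPartialSums.
Variables (R : realType) (b : nat -> R) (s t : nat).

Lemma psum_restr_lo x : (x <= s)%N -> psum (restr b s t) x = 0.
Proof.
move=> xs; rewrite /psum big1_seq // => j /andP[_]; rewrite mem_index_iota => /andP[_ jx].
by rewrite /restr leqNgt (leq_trans jx xs).
Qed.

Lemma psum_restr_mid x : (s <= x)%N -> (x <= t)%N ->
  psum (restr b s t) x = \sum_(s <= j < x) b j.
Proof.
move=> sx xt; rewrite /psum (big_cat_nat (leq0n s) sx) /= -/(psum _ s) psum_restr_lo // add0r.
by apply: eq_big_nat => j /andP[sj jx]; rewrite /restr sj (leq_trans jx xt).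
Qed.

Lemma psum_restr_hi x : (s <= t)%N -> (t <= x)%N ->
  psum (restr b s t) x = \sum_(s <= j < t) b j.
Proof.
move=> st tx; rewrite /psum (big_cat_nat (leq0n t) tx) /= -/(psum _ t) psum_restr_mid //.
rewrite [X in _ + X]big1_seq ?addr0 // => j.
by rewrite mem_index_iota => /andP[_ /andP[tj _]]; rewrite /restr ltnNge tj andbF.
Qed.

End RestrictedPartialSums.

Section Construction.
Variables (R : realType) (E : normedModType R) (e : nat -> E).
Variables (l : nat) (n : nat -> nat) (a : nat -> R).
Hypothesis n_incr : forall i, (i < l)%N -> (n i < n i.+1)%N.
Hypothesis a_blocks0 : forall i, (i < l)%N -> \sum_(n i <= j < n i.+1) a j = 0.

Definition Sv := psum (restr a (n 0%N) (n l)).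
Definition Sb i := psum (restr a (n i) (n i.+1)).

Lemma n_step i : (i < l)%N -> (n i <= n i.+1)%N.
Proof. by move=> il; apply/ltnW/n_incr. Qed.

Lemma n_homo i j : (i <= j)%N -> (j <= l)%N -> (n i <= n j)%N.
Proof. exact: leq_homo_upto n_step. Qed.

Lemma sum_a_prefix i : (i <= l)%N -> \sum_(n 0%N <= j < n i) a j = 0.
Proof.
move=> il; rewrite -(@big_nat_chain _ n i a) => [|j ji]; last exact/n_step/(leq_trans ji).
by rewrite big1 // => j _; apply/a_blocks0/(leq_trans (ltn_ord j)).
Qed.

Lemma Sv_lo x : (x <= n 0%N)%N -> Sv x = 0.
Proof. exact: psum_restr_lo. Qed.

Lemma Sv_hi x : (n l <= x)%N -> Sv x = 0.
Proof. by move=> lx; rewrite /Sv psum_restr_hi ?sum_a_prefix ?n_homo. Qed.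

Lemma Sv_mid x : (n 0%N <= x)%N -> (x <= n l)%N -> Sv x = \sum_(n 0%N <= j < x) a j.
Proof. exact: psum_restr_mid. Qed.

Lemma Sv_n i : (i <= l)%N -> Sv (n i) = 0.
Proof. by move=> il; rewrite Sv_mid ?sum_a_prefix ?n_homo. Qed.

Lemma Sb_lo i x : (x <= n i)%N -> Sb i x = 0.
Proof. exact: psum_restr_lo. Qed.

Lemma Sb_hi i x : (i < l)%N -> (n i.+1 <= x)%N -> Sb i x = 0.
Proof. by move=> il ix; rewrite /Sb psum_restr_hi ?a_blocks0 ?n_step. Qed.

Lemma Sb_mid i x : (i < l)%N -> (n i <= x)%N -> (x <= n i.+1)%N -> Sb i x = Sv x.
Proof.
move=> il ix xi.
have n0i : (n 0%N <= n i)%N by apply: n_homo => //; apply: ltnW.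
have nil : (n i.+1 <= n l)%N by apply: n_homo.
rewrite /Sb psum_restr_mid // Sv_mid ?(leq_trans n0i ix) ?(leq_trans xi nil) //.
by rewrite (big_cat_nat n0i ix) /= sum_a_prefix ?add0r // ltnW.
Qed.

Section Refinement.
Variable p : seq nat.
Hypothesis p_part : is_partition p.

Lemma p_sorted : sorted ltn p. Proof. by case/and3P: p_part. Qed.
Lemma p_head : nth 0%N p 0%N = 0%N. Proof. by case/and3P: p_part => _ /eqP. Qed.
Lemma p_size_gt0 : (0 < size p)%N. Proof. by case/and3P: p_part => /ltnW. Qed.

Definition top := (last 0%N p + n l).+1.

Lemma p_lt_top : all (fun x => x < top)%N p.
Proof.
apply/allP => x xp; rewrite ltnS (leq_trans (sorted_ltn_leq_last p_sorted xp)) //.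
exact: leq_addr.
Qed.

Lemma mem_p_lt_top x : x \in p -> (x < top)%N.
Proof. exact: (allP p_lt_top). Qed.

Lemma nl_lt_top : (n l < top)%N.
Proof. by rewrite ltnS leq_addl. Qed.

Definition is_cut x := has (fun i => n i == x) (iota 0%N l.+1).

Lemma is_cut_n i : (i <= l)%N -> is_cut (n i).
Proof. by move=> il; apply/hasP; exists i => //; rewrite mem_iota. Qed.

Lemma is_cutP x : is_cut x -> exists2 i, (i <= l)%N & n i = x.
Proof. by case/hasP => i; rewrite mem_iota add0n ltnS => /andP[_ il] /eqP; exists i. Qed.

Lemma is_cut_leq x : is_cut x -> (x <= n l)%N.
Proof. by case/is_cutP => i il <-; apply: n_homo. Qed.

Lemma Sv_is_cut x : is_cut x -> Sv x = 0.
Proof. by case/is_cutP => i il <-; apply: Sv_n. Qed.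

Definition inQ x := (x \in p) || is_cut x.
Definition Q := seq.filter inQ (iota 0%N top).

Lemma Q_sorted : sorted ltn Q.
Proof. exact/sorted_filter/iota_ltn_sorted/ltn_trans. Qed.

Lemma mem_Q x : (x \in Q) = inQ x && (x < top)%N.
Proof. by rewrite mem_filter mem_iota add0n. Qed.

Lemma Q_lt_top : all (fun x => x < top)%N Q.
Proof. by apply/allP => x; rewrite mem_Q => /andP[]. Qed.

Lemma mem_Q_p x : x \in p -> x \in Q.
Proof. by move=> xp; rewrite mem_Q /inQ xp mem_p_lt_top. Qed.

Lemma mem_Q_is_cut x : is_cut x -> x \in Q.
Proof. by move=> cx; rewrite mem_Q /inQ cx orbT (leq_ltn_trans (is_cut_leq cx) nl_lt_top). Qed.

Lemma Sv_Q_notin_p x : x \in Q -> x \notin p -> Sv x = 0.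
Proof. by rewrite mem_Q /inQ => /andP[/orP[->//|/Sv_is_cut]]. Qed.

Lemma Sv_top : Sv top = 0.
Proof. exact/Sv_hi/ltnW/nl_lt_top. Qed.

Definition w_coef t := if t \in Q then Sv (next_in Q top t) - Sv t else 0.
Definition w := \sum_(t < top) w_coef t *: e t.

Lemma w_coef_out t : ((t < n 0%N) || (n l <= t))%N -> w_coef t = 0.
Proof.
rewrite /w_coef; case tQ: (t \in Q) => //.
have [t_lt _ _ nx_min] := next_inP Q_sorted Q_lt_top tQ.
case/orP => [t0|lt].
  rewrite !Sv_lo ?subrr //; first exact: ltnW.
  exact: nx_min (mem_Q_is_cut (is_cut_n (leq0n l))) t0.
by rewrite !Sv_hi ?subrr // ltnW // (leq_ltn_trans lt t_lt).
Qed.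

Lemma sum_blk_w : \sum_(i < l) blk e n w_coef i = w.
Proof.
rewrite /blk (big_nat_chain (fun j => w_coef j *: e j) n_step).
have n0l : (n 0%N <= n l)%N by apply: n_homo.
rewrite -(big_ord_interval (fun j => w_coef j *: e j) n0l (ltnW nl_lt_top)).
apply: eq_bigr => t _; case: ifP => // /negbT; rewrite negb_and -!ltnNge => t_out.
by rewrite w_coef_out ?scale0r.
Qed.

Section Block.
Variable i : nat.
Hypothesis il : (i < l)%N.

(* 0 is kept so that Qi is a partition; below n i the i-th block has no mass. *)
Definition inQi x := (x == 0%N) || (n i <= x <= n i.+1)%N && inQ x.
Definition Qi := seq.filter inQi (iota 0%N top).

Lemma Qi_sorted : sorted ltn Qi.
Proof. exact/sorted_filter/iota_ltn_sorted/ltn_trans. Qed.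

Lemma mem_Qi x : (x \in Qi) = inQi x && (x < top)%N.
Proof. by rewrite mem_filter mem_iota add0n. Qed.

Lemma Qi_lt_top : all (fun x => x < top)%N Qi.
Proof. by apply/allP => x; rewrite mem_Qi => /andP[]. Qed.

Lemma ni1_lt_top : (n i.+1 < top)%N.
Proof. exact: leq_ltn_trans (n_homo il (leqnn l)) nl_lt_top. Qed.

Lemma mem_Qi_Q t : (n i <= t <= n i.+1)%N -> (t \in Qi) = (t \in Q).
Proof.
move=> t_rng; rewrite mem_Qi mem_Q /inQi t_rng /=.
case: eqP => [t0|//] /=; suff -> : inQ t by [].
move: t_rng; rewrite t0 leqn0 => /andP[/eqP ni0 _].
by rewrite /inQ -ni0 is_cut_n ?orbT // ltnW.
Qed.

Lemma ni_in_Qi : n i \in Qi.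
Proof. by rewrite mem_Qi_Q ?leqnn ?n_step // mem_Q_is_cut // is_cut_n // ltnW. Qed.

Lemma ni1_in_Qi : n i.+1 \in Qi.
Proof. by rewrite mem_Qi_Q ?leqnn ?n_step // mem_Q_is_cut // is_cut_n. Qed.

Lemma next_in_Qi t : t \in Q -> (n i <= t < n i.+1)%N -> next_in Qi top t = next_in Q top t.
Proof.
move=> tQ /andP[it ti].
have [t_lt nx_le nx_in nx_min] := next_inP Q_sorted Q_lt_top tQ.
have nx_ni1 : (next_in Q top t <= n i.+1)%N by apply: nx_min ti; apply/mem_Q_is_cut/is_cut_n.
have it_nx : (n i <= next_in Q top t)%N by apply: leq_trans it (ltnW t_lt).
apply: (next_in_eq Qi_sorted Qi_lt_top _ t_lt nx_le).
- by rewrite mem_Qi_Q // it (ltnW ti).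
- by move=> nx_top; rewrite mem_Qi_Q ?it_nx ?nx_ni1 ?nx_in.
move=> z; rewrite mem_Qi /inQi => /andP[/orP[/eqP z0|/andP[_ zQ]] z_top] tz.
  by rewrite z0 in tz.
by apply: nx_min tz; rewrite mem_Q zQ.
Qed.

Lemma Sb_next_in_Qi t : (t < top)%N ->
  (if t \in Qi then Sb i (next_in Qi top t) - Sb i t else 0)
  = (if (n i <= t < n i.+1)%N then w_coef t else 0).
Proof.
move=> t_top; case: (boolP (n i <= t < n i.+1)%N) => [/andP[it ti]|t_out].
  have t_rng : (n i <= t <= n i.+1)%N by rewrite it ltnW.
  rewrite /w_coef -(mem_Qi_Q t_rng); case tQi: (t \in Qi) => //.
  have tQ : t \in Q by rewrite -(mem_Qi_Q t_rng).
  have [t_lt _ _ nx_min] := next_inP Q_sorted Q_lt_top tQ.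
  have nx_ni1 : (next_in Q top t <= n i.+1)%N by apply: nx_min ti; apply/mem_Q_is_cut/is_cut_n.
  rewrite next_in_Qi ?it // !Sb_mid // ?(ltnW ti) //.
  exact: leq_trans it (ltnW t_lt).
case: ifP => // tQi; have [t_lt _ _ nx_min] := next_inP Qi_sorted Qi_lt_top tQi.
have [ti|it] := leqP (n i.+1) t.
  by rewrite !Sb_hi ?subrr // ltnW // (leq_ltn_trans ti t_lt).
have t_lt_ni : (t < n i)%N by move: t_out; rewrite it andbT -ltnNge.
by rewrite !Sb_lo ?subrr ?(ltnW t_lt_ni) // nx_min // ni_in_Qi.
Qed.

Lemma Qi_partition : is_partition Qi.
Proof.
have Qi0 : Qi = 0%N :: seq.filter inQi (iota 1 (last 0%N p + n l)) by [].
apply/and3P; split; last exact: Qi_sorted.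
  rewrite Qi0 /= ltnS lt0n size_eq0; apply/eqP => Qi1.
  by move: ni1_in_Qi (n_incr il); rewrite Qi0 Qi1 inE => /eqP ->.
by rewrite Qi0.
Qed.

Lemma Jval_block : Jval e (restr a (n i) (n i.+1)) Qi = `|blk e n w_coef i|.
Proof.
have Qi_gt0 : (0 < size Qi)%N by case/and3P: Qi_partition => /ltnW.
rewrite /Jval; congr `|_|.
rewrite (eq_bigr (fun j : 'I_(size Qi).-1 =>
    (Sb i (nth 0%N Qi j.+1) - Sb i (nth 0%N Qi j)) *: e (nth 0%N Qi j))) => [|j _]; last first.
  rewrite big_nat_psum //; apply: sorted_ltn_nth_leq Qi_sorted (leqnSn j) _.
  by rewrite -ltn_predRL.
have Sb_last : Sb i (last 0%N Qi) = 0.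
  exact: Sb_hi il (sorted_ltn_leq_last Qi_sorted ni1_in_Qi).
move: (big_partition_next_in (fun x y => Sb i y - Sb i x) e Qi_sorted Qi_lt_top Qi_gt0) => /=.
rewrite Sb_last (Sb_hi il (ltnW ni1_lt_top)) subrr scale0r addr0 => ->.
rewrite /blk -(big_ord_interval (fun j => w_coef j *: e j) (ltnW (n_incr il)) (ltnW ni1_lt_top)).
by apply: eq_bigr => t _; rewrite Sb_next_in_Qi //; case: ifP; rewrite ?scale0r.
Qed.

Lemma block_le_Jnorm : normalized e ->
  `|blk e n w_coef i| <= Jnorm e (restr a (n i) (n i.+1)).
Proof.
move=> e_norm; rewrite -Jval_block.
apply: (Jval_le_Jnorm (M := n i.+1)) e_norm Qi_partition => j ij.
by rewrite /restr ltnNge ij andbF.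
Qed.

End Block.

Lemma p_last_in : last 0%N p \in p.
Proof. by rewrite -nth_last mem_nth // prednK // p_size_gt0. Qed.

Definition vp :=
  \sum_(j < (size p).-1) (Sv (nth 0%N p j.+1) - Sv (nth 0%N p j)) *: e (nth 0%N p j).

Lemma Jval_vp : Jval e (restr a (n 0%N) (n l)) p = `|vp|.
Proof.
rewrite /Jval /vp; congr `|_|; apply: eq_bigr => j _.
rewrite big_nat_psum //; apply: sorted_ltn_nth_leq p_sorted (leqnSn j) _.
by rewrite -ltn_predRL.
Qed.

Definition gap_val x y := if (next_in Q top x < y)%N then Sv y else 0.
Definition gap_coef t := if t \in p then gap_val t (next_in p top t) else 0.
Definition extra_coef t := if (t \in Q) && (t \notin p) then Sv (next_in Q top t) else 0.

Lemma v_coef_decomp t :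
  (if t \in p then Sv (next_in p top t) - Sv t else 0) = w_coef t + gap_coef t - extra_coef t.
Proof.
rewrite /w_coef /gap_coef /gap_val /extra_coef; case tp: (t \in p) => /=; last first.
  by case tQ: (t \in Q) => /=; rewrite ?(Sv_Q_notin_p tQ (negbT tp)); lra.
have tQ := mem_Q_p tp; rewrite tQ /=.
have [p_gt p_le p_in p_min] := next_inP p_sorted p_lt_top tp.
have [q_gt q_le q_in q_min] := next_inP Q_sorted Q_lt_top tQ.
have q_le_p : (next_in Q top t <= next_in p top t)%N.
  have [p_top|/(leq_trans q_le)//] := ltnP (next_in p top t) top.
  exact/q_min/p_gt/mem_Q_p/p_in.
case: ifP => [q_lt_p|/negbT]; last first.
  rewrite -leqNgt => p_le_q.
  have -> : next_in Q top t = next_in p top t by apply/anti_leq; rewrite q_le_p p_le_q.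
  lra.
have q_top := leq_trans q_lt_p p_le.
have q_notin_p : next_in Q top t \notin p.
  by apply/negP => /p_min /(_ q_gt); rewrite leqNgt q_lt_p.
rewrite (Sv_Q_notin_p (q_in q_top) q_notin_p); lra.
Qed.

Lemma vp_decomp : vp = w + \sum_(t < top) gap_coef t *: e t - \sum_(t < top) extra_coef t *: e t
  + Sv (last 0%N p) *: e (last 0%N p).
Proof.
have v_coef_sum : \sum_(t < top) (if (t : nat) \in p then Sv (next_in p top t) - Sv t else 0) *: e t
    = w + \sum_(t < top) gap_coef t *: e t - \sum_(t < top) extra_coef t *: e t.
  rewrite /w -big_split -sumrB; apply: eq_bigr => t _.
  by rewrite v_coef_decomp scalerBl scalerDl.
move: (big_partition_next_in (fun x y => Sv y - Sv x) e p_sorted p_lt_top p_size_gt0) => /=.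
by rewrite Sv_top sub0r v_coef_sum => <-; rewrite scaleNr addrNK.
Qed.

Lemma sum_extra_mask : \sum_(t < top) extra_coef t *: e t
  = \sum_(t < top) (if ((t : nat) \in Q) && ((t : nat) \notin p) then w_coef t else 0) *: e t.
Proof.
apply: eq_bigr => t _; rewrite /extra_coef /w_coef; case: ifP => // /andP[tQ tp].
by rewrite tQ (Sv_Q_notin_p tQ tp) subr0.
Qed.

Lemma w_coef_last : w_coef (last 0%N p) = - Sv (last 0%N p).
Proof.
have tQ := mem_Q_p p_last_in; rewrite /w_coef tQ.
have [t_lt t_le t_in _] := next_inP Q_sorted Q_lt_top tQ.
have [t_top|top_le] := ltnP (next_in Q top (last 0%N p)) top.
  suff t_notin_p : next_in Q top (last 0%N p) \notin p.
    by rewrite (Sv_Q_notin_p (t_in t_top) t_notin_p) sub0r.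
  by apply/negP => /(sorted_ltn_leq_last p_sorted); rewrite leqNgt t_lt.
have -> : next_in Q top (last 0%N p) = top by apply/anti_leq; rewrite t_le top_le.
by rewrite Sv_top sub0r.
Qed.

Lemma sum_last_mask : \sum_(t < top) (if (t : nat) == last 0%N p then w_coef t else 0) *: e t
  = - (Sv (last 0%N p) *: e (last 0%N p)).
Proof.
rewrite (eq_bigr (fun t : 'I_top =>
    if (t : nat) == last 0%N p then w_coef (last 0%N p) *: e (last 0%N p) else 0)) => [|t _].
  rewrite -big_mkcond (big_ord1_eq _ (fun=> w_coef (last 0%N p) *: e (last 0%N p))).
  by rewrite mem_p_lt_top ?p_last_in // w_coef_last scaleNr.
by case: eqP => [->|_]; rewrite ?scale0r.
Qed.

Definition gap_pt j := if (next_in Q top (nth 0%N p j) < nth 0%N p j.+1)%N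
  then prev_in Q (nth 0%N p j.+1) else nth 0%N p j.

Definition pre_p t := [&& t \in Q, t \notin p & next_in Q top t \in p].

Lemma sum_gap_nth : \sum_(t < top) gap_coef t *: e t
  = \sum_(j < (size p).-1) gap_val (nth 0%N p j) (nth 0%N p j.+1) *: e (nth 0%N p j).
Proof.
have gap_top : gap_val (last 0%N p) top = 0 by rewrite /gap_val Sv_top; case: ifP.
move: (big_partition_next_in gap_val e p_sorted p_lt_top p_size_gt0).
by rewrite gap_top scale0r addr0 => /esym.
Qed.

Lemma gap_prev_inP x y : x \in p -> y \in p -> next_in p top x = y ->
  (next_in Q top x < y)%N ->
  [/\ (x < prev_in Q y)%N, (prev_in Q y < y)%N, prev_in Q y \in Q, prev_in Q y \notin p
    & next_in Q top (prev_in Q y) = y].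
Proof.
move=> xp yp nx_xy gap.
have [x_lt _ nxQ_in _] := next_inP Q_sorted Q_lt_top (mem_Q_p xp).
have nxQ_top : (next_in Q top x < top)%N := ltn_trans gap (mem_p_lt_top yp).
have [pv_in pv_lt pv_ge nx_pv] := prev_inP top Q_sorted (mem_Q_p yp) (nxQ_in nxQ_top) gap.
have x_pv := leq_trans x_lt pv_ge.
split => //; apply/negP => pv_p.
have [_ _ _ nxp_min] := next_inP p_sorted p_lt_top xp.
by have := nxp_min _ pv_p x_pv; rewrite nx_xy leqNgt pv_lt.
Qed.

Lemma gap_prev_in_nthP j : (j < (size p).-1)%N ->
  (next_in Q top (nth 0%N p j) < nth 0%N p j.+1)%N ->
  [/\ (nth 0%N p j < gap_pt j)%N, (gap_pt j < nth 0%N p j.+1)%N, gap_pt j \in Q,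
      gap_pt j \notin p & next_in Q top (gap_pt j) = nth 0%N p j.+1].
Proof.
move=> jk gap; have js : (j.+1 < size p)%N by rewrite -ltn_predRL.
rewrite /gap_pt gap; apply: gap_prev_inP => //; first exact/mem_nth/ltnW.
  exact: mem_nth.
exact: (next_in_nth_lt _ p_sorted js).
Qed.

Lemma gap_pt_range j : (j < (size p).-1)%N -> (nth 0%N p j <= gap_pt j < nth 0%N p j.+1)%N.
Proof.
move=> jk; case gap: (next_in Q top (nth 0%N p j) < nth 0%N p j.+1)%N.
  by have [pt_gt pt_lt _ _ _] := gap_prev_in_nthP jk gap; rewrite ltnW.
rewrite /gap_pt gap leqnn sorted_ltn_nth_lt ?p_sorted //.
by rewrite -ltn_predRL.
Qed.

Lemma gap_pt_pre_p j : (j < (size p).-1)%N ->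
  gap_val (nth 0%N p j) (nth 0%N p j.+1) != 0 ->
  pre_p (gap_pt j) /\ next_in Q top (gap_pt j) = nth 0%N p j.+1.
Proof.
move=> jk; rewrite /gap_val; case: ifP => [gap _|_]; last by rewrite eqxx.
have [_ _ pt_Q pt_p nx_pt] := gap_prev_in_nthP jk gap.
by rewrite /pre_p pt_Q pt_p nx_pt mem_nth // -ltn_predRL.
Qed.

Lemma pre_p_gap_pt t : pre_p t -> exists j : 'I_(size p).-1,
  [/\ gap_pt j = t, nth 0%N p j.+1 = next_in Q top t
    & gap_val (nth 0%N p j) (nth 0%N p j.+1) = w_coef t].
Proof.
case/and3P => tQ tp yp.
have [t_lt _ _ nxQ_min] := next_inP Q_sorted Q_lt_top tQ.
have y_gt0 : (0 < index (next_in Q top t) p)%N.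
  rewrite lt0n; apply/negP => /eqP y0.
  by move: t_lt; rewrite -(nth_index 0%N yp) y0 p_head.
set j := (index (next_in Q top t) p).-1.
have jS : j.+1 = index (next_in Q top t) p by rewrite prednK.
have js : (j.+1 < size p)%N by rewrite jS index_mem.
have y_nth : nth 0%N p j.+1 = next_in Q top t by rewrite jS nth_index.
have xp : nth 0%N p j \in p by rewrite mem_nth // ltnW.
have x_lt_y : (nth 0%N p j < next_in Q top t)%N.
  by rewrite -y_nth sorted_ltn_nth_lt ?p_sorted.
have x_lt_t : (nth 0%N p j < t)%N.
  case: (ltngtP (nth 0%N p j) t) => // [t_lt_x|x_eq_t]; last by move: tp; rewrite -x_eq_t xp.
  by have := nxQ_min _ (mem_Q_p xp) t_lt_x; rewrite leqNgt x_lt_y.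
have gap : (next_in Q top (nth 0%N p j) < nth 0%N p j.+1)%N.
  have [_ _ _ min] := next_inP Q_sorted Q_lt_top (mem_Q_p xp).
  by rewrite y_nth (leq_ltn_trans (min _ tQ x_lt_t)).
have jk : (j < (size p).-1)%N by rewrite ltn_predRL.
exists (Ordinal jk); split => //=.
  by rewrite /gap_pt gap y_nth prev_in_next_in ?Q_sorted ?mem_p_lt_top.
by rewrite /gap_val /w_coef gap tQ (Sv_Q_notin_p tQ tp) subr0 y_nth.
Qed.

Lemma sum_gap_val_at t : \sum_(j < (size p).-1)
    (if t == gap_pt j then gap_val (nth 0%N p j) (nth 0%N p j.+1) else 0)
  = if pre_p t then w_coef t else 0.
Proof.
case t_pre: (pre_p t); last first.
  apply: big1 => j _; case: eqP => // t_j; apply/eqP; apply: contraFT t_pre => val_ne.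
  by rewrite t_j; case: (gap_pt_pre_p (ltn_ord j) val_ne).
have js (k : 'I_(size p).-1) : (k.+1 < size p)%N by rewrite -ltn_predRL.
have [j0 [t_j0 y_j0 val_j0]] := pre_p_gap_pt t_pre.
rewrite (bigD1 j0) //= t_j0 eqxx val_j0 big1 ?addr0 // => j j_ne.
case: eqP => // t_j; apply/eqP; apply: contraTT j_ne => val_ne; rewrite negbK.
have [_ y_j] := gap_pt_pre_p (ltn_ord j) val_ne.
rewrite -(inj_eq val_inj) -eqSS -(nth_uniq 0%N (js j) (js j0) (sorted_ltn_uniq p_sorted)).
by rewrite -y_j -t_j y_j0 eqxx.
Qed.

Lemma sum_gap_pt :
  \sum_(j < (size p).-1) gap_val (nth 0%N p j) (nth 0%N p j.+1) *: e (gap_pt j)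
  = \sum_(t < top) (if pre_p t then w_coef t else 0) *: e t.
Proof.
have pt_top j : (j < (size p).-1)%N -> (gap_pt j < top)%N.
  move=> jk; case/andP: (gap_pt_range jk) => _ pt_lt.
  by rewrite (leq_trans pt_lt) // ltnW // mem_p_lt_top // mem_nth // -ltn_predRL.
transitivity (\sum_(j < (size p).-1) \sum_(t < top)
    (if (t : nat) == gap_pt j then gap_val (nth 0%N p j) (nth 0%N p j.+1) else 0) *: e t).
  apply: eq_bigr => j _; set c := gap_val (nth 0%N p j) (nth 0%N p j.+1).
  rewrite (eq_bigr (fun t : 'I_top => if (t : nat) == gap_pt j then c *: e (gap_pt j) else 0)).
    by rewrite -big_mkcond (big_ord1_eq _ (fun=> c *: e (gap_pt j))) pt_top.
  by move=> t _; case: eqP => [->|_]; rewrite ?scale0r.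
by rewrite exchange_big; apply: eq_bigr => t _; rewrite -scaler_suml sum_gap_val_at.
Qed.

Section Bounds.
Variables (K D : R).
Hypotheses (e_uncond : unconditional_with e K) (e_dom : right_dominant_with e D).

Lemma norm_gap_le : `|\sum_(t < top) gap_coef t *: e t| <= `|D| * ((1 + K) / 2 * `|w|).
Proof.
have pt_ge j : (j < (size p).-1)%N -> (nth 0%N p j <= gap_pt j)%N.
  by case/gap_pt_range/andP.
have pt_lt j : (j.+1 < (size p).-1)%N -> (gap_pt j < nth 0%N p j.+1)%N.
  by move/ltnW/gap_pt_range/andP => [].
rewrite sum_gap_nth.
rewrite (le_trans (e_dom (fun j => gap_val (nth 0%N p j) (nth 0%N p j.+1)) pt_ge pt_lt)) //.
rewrite sum_gap_pt (le_trans (ler_wpM2r (normr_ge0 _) (ler_norm D))) //.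
by apply: ler_wpM2l; [exact: normr_ge0 | exact: norm_sum_mask_le e_uncond top w_coef pre_p].
Qed.

Lemma norm_extra_le : `|\sum_(t < top) extra_coef t *: e t| <= (1 + K) / 2 * `|w|.
Proof.
rewrite sum_extra_mask.
exact: norm_sum_mask_le e_uncond top w_coef (fun t => (t \in Q) && (t \notin p)).
Qed.

Lemma norm_last_le : `|Sv (last 0%N p) *: e (last 0%N p)| <= (1 + K) / 2 * `|w|.
Proof.
rewrite -normrN -sum_last_mask.
exact: norm_sum_mask_le e_uncond top w_coef (fun t => t == last 0%N p).
Qed.

Lemma norm_vp_le : `|vp| <= (1 + (`|D| + 2) * ((1 + K) / 2)) * `|w|.
Proof.
have h_gap := norm_gap_le; have h_extra := norm_extra_le; have h_last := norm_last_le.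
rewrite vp_decomp; set g := \sum_(t < top) gap_coef t *: e t in h_gap *.
set x := \sum_(t < top) extra_coef t *: e t in h_extra *.
set y := Sv (last 0%N p) *: e (last 0%N p) in h_last *.
have tri : `|w + g - x + y| <= `|w| + `|g| + `|x| + `|y|.
  rewrite (le_trans (ler_normD _ _)) // lerD2r (le_trans (ler_normB _ _)) // lerD2r.
  exact: ler_normD.
have -> : (1 + (`|D| + 2) * ((1 + K) / 2)) * `|w|
    = `|w| + `|D| * ((1 + K) / 2 * `|w|) + (1 + K) / 2 * `|w| + (1 + K) / 2 * `|w| by ring.
move: h_gap h_extra h_last tri; set A := (1 + K) / 2 * `|w|; set B := `|D| * A; lra.
Qed.

End Bounds.

End Refinement.
End Construction.

Theorem lemma1 (R : realType) (E : completeNormedModType R) (e : nat -> E) :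
  schauder_basis e -> normalized e -> right_dominant e ->
  exists C : R, forall (l : nat) (n : nat -> nat) (a : nat -> R),
    (forall i, (i < l)%N -> (n i < n i.+1)%N) ->
    (forall i, (i < l)%N -> \sum_(n i <= j < n i.+1) a j = 0) ->
    exists (q : nat -> nat) (c : nat -> R),
      (forall i, (i < l)%N -> (q i < q i.+1)%N) /\
      (forall i, (i < l)%N -> `|blk e q c i| <= Jnorm e (restr a (n i) (n i.+1))) /\
      Jnorm e (restr a (n 0%N) (n l)) <= C * `|\sum_(i < l) blk e q c i|.
Proof.
move=> _ e_norm [[K e_uncond] [D e_dom]].
exists (2 * (1 + (`|D| + 2) * ((1 + K) / 2))) => l n a n_incr a_blocks0.
have v_supp j : (n l <= j)%N -> restr a (n 0%N) (n l) j = 0.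
  by move=> lj; rewrite /restr ltnNge lj andbF.
have [p p_part Jnorm_le] := Jnorm_le_twice_Jval v_supp e_norm.
exists n, (w_coef l n a p); split; [exact: n_incr | split].
  by move=> i il; exact: block_le_Jnorm.
rewrite sum_blk_w // (le_trans Jnorm_le) // Jval_vp // -mulrA ler_pM2l //.
exact: norm_vp_le.
Qed.
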